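(* For all integers $m\ge 2$, $n\ge 2$, the state complexity of $L(M)^*\cap L(N)$, where $M$ ranges over complete DFAs with $m$ states and $N$ over complete DFAs with $n$ states (over a common alphabet), is exactly $\frac{3}{4}2^m\cdot n-n+1$: for every such $M,N$ some DFA with at most $\frac{3}{4}2^m\cdot n-n+1$ states accepts $L(M)^*\cap L(N)$, and there exist such $M,N$ for which the minimal complete DFA of $L(M)^*\cap L(N)$ has exactly $\frac{3}{4}2^m\cdot n-n+1$ states.
   Context: DFAs are complete deterministic finite automata; $L(M)$ is the accepted language; $L^*$ is the Kleene star. The state complexity of a regular language is the number of states of its minimal complete DFA; the state complexity of an operation is the maximum state complexity of its result over all argument DFAs of the given sizes. *)

From mathcomp Require Import all_boot.
Set Implicit Arguments. Unset Strict Implicit. Unset Printing Implicit Defensive.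

Record dfa (Sigma Q : finType) := Dfa {
  start : Q;
  delta : Q -> Sigma -> Q;
  final : pred Q }.

Definition language (Sigma : finType) := seq Sigma -> Prop.

Definition lang (Sigma Q : finType) (A : dfa Sigma Q) : language Sigma :=
  fun w => final A (foldl (delta A) (start A) w).

Definition star (Sigma : finType) (L : language Sigma) : language Sigma :=
  fun w => exists ws : seq (seq Sigma), w = flatten ws /\ (forall u, u \in ws -> L u).

Definition inter (Sigma : finType) (L1 L2 : language Sigma) : language Sigma :=
  fun w => L1 w /\ L2 w.

Definition recognizes (Sigma Q : finType) (A : dfa Sigma Q) (L : language Sigma) :=
  forall w, lang A w <-> L w.

Definition state_complexity_is (Sigma : finType) (L : language Sigma) (k : nat) :=
  (exists A : dfa Sigma 'I_k, recognizes A L) /\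
  (forall (k' : nat) (A : dfa Sigma 'I_k'), recognizes A L -> k <= k').

From mathcomp Require Import all_boot zify.
Set Implicit Arguments. Unset Strict Implicit. Unset Printing Implicit Defensive.

(* Upper bound: run the subset automaton for the star of L(M), whose initial state is
   the empty set, in parallel with N.  If M has an accepting state x other than its
   start state q0, then every reachable nonempty set containing x also contains q0,
   and the empty set only occurs together with the start state of N; there are
   1 + (3 * 2^(m-2) - 1) * n such pairs.  Otherwise L(M)^* is L(M) or {eps}, and
   m * n states suffice.
   Lower bound: over the alphabet of all pairs of transformations of the two state
   sets, with M accepting only in a state other than its start, all these pairs are
   reachable and any two of them are separated by a word of length at most one. *)

Lemma exists_imset_onto (T : finType) (A S : {set T}) :
  S != set0 -> #|S| <= #|A| -> exists f : T -> T, f @: A = S.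
Proof.
case/set0Pn => s0 Ss0 SA.
exists (fun x => nth s0 (enum S) (index x (enum A))).
apply/setP => y; apply/imsetP/idP => [[x Ax ->]|Sy].
  have [iS|iS] := ltnP (index x (enum A)) (size (enum S)); last by rewrite nth_default.
  by rewrite -mem_enum mem_nth.
have iA : index y (enum S) < size (enum A).
  by rewrite -cardE (leq_trans _ SA) // cardE index_mem mem_enum.
exists (nth y (enum A) (index y (enum S))); first by rewrite -mem_enum mem_nth.
by rewrite index_uniq ?enum_uniq // nth_index // mem_enum.
Qed.

Lemma exists_subset_card (T : finType) (A : {set T}) k :
  k <= #|A| -> exists2 X : {set T}, X \subset A & #|X| = k.
Proof.
case/card_geqP => s [s_uniq s_size sA]; exists [set x in s].
  by apply/subsetP => x; rewrite inE => /sA.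
by rewrite cardsE (card_uniqP s_uniq).
Qed.

Section Automata.
Variable Sigma : finType.
Implicit Types (L : language Sigma) (w z : seq Sigma).

Lemma recognizes_ext (Q : finType) (A : dfa Sigma Q) L1 L2 :
  recognizes A L1 -> (forall w, L1 w <-> L2 w) -> recognizes A L2.
Proof. by move=> AL1 L12 w; apply: iff_trans (AL1 w) (L12 w). Qed.

Lemma recognizes_cancel (Q Q' : finType) (A : dfa Sigma Q) L (h : Q -> Q') (g : Q' -> Q) :
  cancel h g -> recognizes A L -> exists B : dfa Sigma Q', recognizes B L.
Proof.
move=> hK AL.
exists (Dfa (h (start A)) (fun s a => h (delta A (g s) a)) (fun s => final A (g s))).
apply: recognizes_ext AL => w; rewrite /lang /=.
suff -> : forall q, g (foldl (fun s a => h (delta A (g s) a)) (h q) w) = foldl (delta A) q w by [].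
by elim: w => [|a w IH] q /=; rewrite hK ?IH.
Qed.

Lemma recognizes_ord (Q : finType) (A : dfa Sigma Q) L k :
  #|Q| <= k -> recognizes A L -> exists B : dfa Sigma 'I_k, recognizes B L.
Proof.
move=> Qk; apply: (@recognizes_cancel _ _ _ _ (fun q => widen_ord Qk (enum_rank q))
  (fun i => nth (start A) (enum Q) i)) => q.
by rewrite nth_enum_rank.
Qed.

Lemma recognizes_ord_inv (Q : finType) (A : dfa Sigma Q) (P : pred Q) L k :
    P (start A) -> (forall q a, P q -> P (delta A q a)) -> #|[set q | P q]| <= k ->
  recognizes A L -> exists B : dfa Sigma 'I_k, recognizes B L.
Proof.
move=> P0 Pdelta Pk AL.
pose d (q : {q | P q}) a : {q | P q} := exist _ (delta A (val q) a) (Pdelta _ a (valP q)).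
pose AP := Dfa (exist _ (start A) P0) d (fun q => final A (val q)).
apply: (@recognizes_ord _ AP); first by rewrite card_sig -cardsE.
apply: recognizes_ext AL => w; rewrite /lang /=.
suff -> : forall q, val (foldl d q w) = foldl (delta A) (val q) w by [].
by elim: w => [|a w IH] q //=; rewrite IH.
Qed.

Definition prod_dfa (Q1 Q2 : finType) (A1 : dfa Sigma Q1) (A2 : dfa Sigma Q2) :=
  Dfa (start A1, start A2) (fun q a => (delta A1 q.1 a, delta A2 q.2 a))
      (fun q => final A1 q.1 && final A2 q.2).

Lemma prod_dfa_recognizes (Q1 Q2 : finType) (A1 : dfa Sigma Q1) (A2 : dfa Sigma Q2) L1 L2 :
  recognizes A1 L1 -> recognizes A2 L2 -> recognizes (prod_dfa A1 A2) (inter L1 L2).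
Proof.
move=> AL1 AL2 w; rewrite /inter -AL1 -AL2 /lang.
have -> : forall q, foldl (delta (prod_dfa A1 A2)) q w =
    (foldl (delta A1) q.1 w, foldl (delta A2) q.2 w).
  by elim: w => [|a w IH] [q1 q2] //=; rewrite IH.
by split=> /andP.
Qed.

Definition eps_dfa : dfa Sigma bool := Dfa true (fun _ _ => false) id.

Lemma eps_dfa_recognizes : recognizes eps_dfa (fun w => w = [::]).
Proof.
case=> [|a w]; rewrite /lang /=; first by split.
by have -> : foldl (fun _ _ => false) false w = false by elim: w.
Qed.

Definition reachable (Q : finType) (A : dfa Sigma Q) q :=
  exists w, foldl (delta A) (start A) w = q.

Lemma reachable_start (Q : finType) (A : dfa Sigma Q) : reachable A (start A).
Proof. by exists [::]. Qed.

Lemma reachable_delta (Q : finType) (A : dfa Sigma Q) q a :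
  reachable A q -> reachable A (delta A q a).
Proof. by move=> [w <-]; exists (rcons w a); rewrite foldl_rcons. Qed.

Definition distinguishable (Q : finType) (A : dfa Sigma Q) q r :=
  exists z, final A (foldl (delta A) q z) != final A (foldl (delta A) r z).

Lemma distinguishable_sym (Q : finType) (A : dfa Sigma Q) q r :
  distinguishable A q r -> distinguishable A r q.
Proof. by move=> [z qz]; exists z; rewrite eq_sym. Qed.

Lemma card_le_distinguishable (Q Q' : finType) (C : dfa Sigma Q) (A : dfa Sigma Q')
    (X : {set Q}) :
    recognizes A (lang C) -> {in X, forall q, reachable C q} ->
    {in X &, forall q r, q != r -> distinguishable C q r} ->
  #|X| <= #|Q'|.
Proof.
move=> AC reachX distX.
have wordP q : exists w, (q \in X) ==> (foldl (delta C) (start C) w == q).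
  by case: (boolP (q \in X)) => [/reachX [w /eqP]|]; [exists w | exists [::]].
pose word q := xchoose (wordP q).
have wordE q : q \in X -> foldl (delta C) (start C) (word q) = q.
  by move=> qX; apply/eqP; move/implyP: (xchooseP (wordP q)); apply.
have langE w : final C (foldl (delta C) (start C) w) = final A (foldl (delta A) (start A) w).
  by apply/idP/idP => /AC.
apply: (@leq_card_in _ _ (fun q => foldl (delta A) (start A) (word q))) => q r qX rX Aqr.
apply/eqP/negPn/negP => /(distX _ _ qX rX) [z].
rewrite -(wordE q qX) -(wordE r rX) -!foldl_cat.
by rewrite !langE !foldl_cat Aqr eqxx.
Qed.

End Automata.

Section Star.
Variables (Sigma : finType) (L : language Sigma).

Lemma star_nil : star L [::].
Proof. by exists [::]. Qed.

Lemma star_cat u v : star L u -> L v -> star L (u ++ v).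
Proof.
move=> [ws [-> Lws]] Lv; exists (rcons ws v); split.
  by rewrite -cats1 flatten_cat /= cats0.
by move=> x; rewrite mem_rcons inE => /orP [/eqP -> | /Lws].
Qed.

Lemma star_split_last w : star L w ->
  w = [::] \/ exists u v, [/\ w = u ++ v, star L u, L v & v <> [::]].
Proof.
move=> [ws [-> Lws]]; elim/last_ind: ws Lws => [|ws v IH] Lws; first by left.
have Lws' x : x \in ws -> L x by move=> xws; apply: Lws; rewrite mem_rcons inE xws orbT.
rewrite -cats1 flatten_cat /= cats0.
case: v Lws => [|b v] Lws; first by rewrite cats0; apply: IH.
right; exists (flatten ws), (b :: v); split => //; first by exists ws.
by apply: Lws; rewrite mem_rcons mem_head.
Qed.

Lemma star_empty : (forall w, ~ L w) -> forall w, star L w <-> w = [::].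
Proof.
move=> L0 w; split => [[[|u ws] [-> Lws]] // | ->]; last exact: star_nil.
by case: (L0 u); apply: Lws; rewrite mem_head.
Qed.

End Star.

Section StarDfa.
Variables (Sigma Q : finType) (M : dfa Sigma Q).
Local Notation q0 := (start M).
Implicit Types (S X : {set Q}) (w : seq Sigma).

(* Subset construction for the star, with [set0] as a fresh initial state that
   behaves like [[set q0]] but is accepting. *)
Definition star_support S := if S == set0 then [set q0] else S.
Definition add_start X := if [exists q in X, final M q] then q0 |: X else X.
Definition star_delta S a := add_start [set delta M q a | q in star_support S].
Definition star_final S := (S == set0) || [exists q in S, final M q].
Definition star_dfa := Dfa set0 star_delta star_final.

Lemma star_support_id S : S != set0 -> star_support S = S.
Proof. by rewrite /star_support => /negbTE ->. Qed.

Lemma star_support_neq0 S : star_support S != set0.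
Proof.
rewrite /star_support; case: (S =P set0) => [_|/eqP //].
by apply/set0Pn; exists q0; rewrite inE.
Qed.

Lemma mem_add_start q X :
  (q \in add_start X) = (q \in X) || (q == q0) && [exists r in X, final M r].
Proof.
rewrite /add_start; case: ifP => _; last by rewrite andbF orbF.
by rewrite in_setU1 andbT orbC.
Qed.

Lemma add_start_final X : [exists q in add_start X, final M q] = [exists q in X, final M q].
Proof.
apply/existsP/existsP => -[q /andP [qX fq]].
  move: qX; rewrite mem_add_start => /orP [qX|/andP [_ /existsP //]].
  by exists q; rewrite qX.
by exists q; rewrite mem_add_start qX.
Qed.

Lemma star_delta_neq0 S a : star_delta S a != set0.
Proof.
have /set0Pn [q Sq] := star_support_neq0 S.
apply/set0Pn; exists (delta M q a); rewrite /star_delta mem_add_start.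
by apply/orP; left; apply/imsetP; exists q.
Qed.

Lemma star_delta_start S a x :
  final M x -> x \in star_delta S a -> q0 \in star_delta S a.
Proof.
move=> fx; rewrite !mem_add_start eqxx => /orP [xX|/andP [_ ->]]; last by rewrite orbT.
by apply/orP; right; apply/existsP; exists x; rewrite xX.
Qed.

Lemma star_final_delta S a :
  star_final (star_delta S a) = [exists q in [set delta M q a | q in star_support S], final M q].
Proof. by rewrite /star_final (negbTE (star_delta_neq0 S a)) add_start_final. Qed.

Definition star_run w q :=
  exists u v, [/\ w = u ++ v, star (lang M) u & foldl (delta M) q0 v = q].

Lemma star_run_nil q : star_run [::] q <-> q = q0.
Proof.
split => [[[|? ?] [[|? ?] [//= _ _ <-]]] | ->] //.
by exists [::], [::]; split => //; apply: star_nil.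
Qed.

Lemma star_run_rcons w a q : star_run (rcons w a) q <->
  (exists2 r, star_run w r & q = delta M r a) \/ (q = q0 /\ star (lang M) (rcons w a)).
Proof.
split.
  move=> [u [v [wuv Lu <-]]]; case/lastP: v wuv => [|v b].
    by rewrite cats0 => ->; right.
  rewrite -rcons_cat => /rcons_inj [-> ->]; rewrite foldl_rcons; left.
  by exists (foldl (delta M) q0 v) => //; exists u, v.
case=> [[r [u [v [-> Lu <-]]] ->]|[-> Lw]].
  by exists u, (rcons v a); rewrite rcons_cat foldl_rcons.
by exists (rcons w a), [::]; rewrite cats0.
Qed.

Lemma star_rcons w a :
  star (lang M) (rcons w a) <-> exists2 r, star_run w r & final M (delta M r a).
Proof.
split => [|[r [u [v [-> Lu <-]]] fr]]; last first.
  by rewrite rcons_cat; apply: star_cat => //; rewrite /lang foldl_rcons.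
case/star_split_last => [/(congr1 size)|[u [v [wuv Lu Lv]]]]; first by rewrite size_rcons.
case/lastP: v wuv Lv => [_ _ /(_ erefl) []|v b].
rewrite -rcons_cat => /rcons_inj [-> ->]; rewrite /lang foldl_rcons => Lv _.
by exists (foldl (delta M) q0 v) => //; exists u, v.
Qed.

Lemma star_final_image S w a :
    (forall q, q \in star_support S <-> star_run w q) ->
  [exists q in [set delta M q a | q in star_support S], final M q] <-> star (lang M) (rcons w a).
Proof.
move=> Sw; apply: iff_trans (iff_sym (star_rcons w a)); split.
  by case/existsP => _ /andP [/imsetP [r /Sw wr ->] fr]; exists r.
case=> r /Sw Sr fr; apply/existsP; exists (delta M r a).
by rewrite fr andbT; apply/imsetP; exists r.
Qed.

Lemma mem_star_support_run w q :
  q \in star_support (foldl star_delta set0 w) <-> star_run w q.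
Proof.
elim/last_ind: w q => [|w a IH] q.
  by rewrite star_run_nil /star_support eqxx inE; split => /eqP.
rewrite foldl_rcons star_support_id ?star_delta_neq0 // mem_add_start star_run_rcons.
have Hfin := star_final_image a IH.
split.
  case/orP => [/imsetP [r /IH wr ->]|/andP [/eqP -> /Hfin wa]]; [by left; exists r | by right].
case=> [[r /IH Sr ->]|[-> /Hfin wa]]; first by apply/orP; left; apply/imsetP; exists r.
by rewrite eqxx wa orbT.
Qed.

Lemma star_dfa_recognizes : recognizes star_dfa (star (lang M)).
Proof.
case/lastP => [|w a]; first by rewrite /lang /= /star_final eqxx; split => // _; apply: star_nil.
rewrite /lang /= foldl_rcons star_final_delta.
exact: (star_final_image a (mem_star_support_run w)).
Qed.

Lemma recognizes_star_of_final_eq_start :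
  (forall q, final M q = (q == q0)) -> recognizes M (star (lang M)).
Proof.
move=> finalE w; split => [Lw|[ws [-> Lws]]].
  by exists [:: w]; split => [|u /[!inE] /eqP ->]; rewrite /= ?cats0.
elim: ws Lws => [|u ws IH] Lws; first by rewrite /lang /= finalE.
have /eqP uq0 : foldl (delta M) q0 u == q0 by rewrite -finalE; apply: Lws; rewrite mem_head.
rewrite /lang /= foldl_cat uq0; apply: IH => v vws; apply: Lws; by rewrite inE vws orbT.
Qed.

End StarDfa.

Section AdmissibleStates.
Variables (T P : finType) (x y : T) (p0 : P).

(* When [x] is an accepting state of [M] other than its start state [y] and [p0] is
   the start state of [N], every reachable state of [prod_dfa (star_dfa M) N] is
   admissible. *)
Definition admissible (s : {set T} * P) :=
  if s.1 == set0 then s.2 == p0 else (x \in s.1) ==> (y \in s.1).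

Hypothesis xy : x != y.

Lemma card_sets_mem_notin :
  #|[set S : {set T} | (x \in S) && (y \notin S)]| = 2 ^ (#|T| - 2).
Proof.
pose D := ~: [set x; y].
have -> : [set S : {set T} | (x \in S) && (y \notin S)] = [set x |: A | A in powerset D].
  apply/setP => S; rewrite !inE; apply/andP/imsetP.
    move=> [xS yS]; exists (S :\ x); last by rewrite setD1K.
    rewrite inE; apply/subsetP => z; rewrite !inE => /andP [zx zS].
    by rewrite negb_or zx; apply: contraNneq yS => <-.
  move=> [A]; rewrite inE => /subsetP AD ->; rewrite !inE eqxx negb_or eq_sym xy.
  by split => //; apply/negP => /AD; rewrite !inE eqxx orbT.
rewrite card_in_imset ?card_powerset; first by rewrite -(cardsC [set x; y]) cards2 xy addKn.
move=> A B; rewrite !inE => AD BD AB.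
have xA : x \notin A by apply/negP => /(subsetP AD); rewrite !inE eqxx.
have xB : x \notin B by apply/negP => /(subsetP BD); rewrite !inE eqxx.
by rewrite -(setU1K xA) AB setU1K.
Qed.

Lemma card_sets_mem_imply :
  #|[set S : {set T} | (x \in S) ==> (y \in S)]| = 3 * 2 ^ (#|T| - 2).
Proof.
have T2 : 2 <= #|T| by rewrite -(cardsC [set x; y]) cards2 xy leq_addr.
have := cardsC [set S : {set T} | (x \in S) && (y \notin S)].
have -> : ~: [set S : {set T} | (x \in S) && (y \notin S)] =
         [set S : {set T} | (x \in S) ==> (y \in S)].
  by apply/setP => S; rewrite !inE negb_and negbK implybE.
have -> : #|{set T}| = 2 ^ #|T| by rewrite -[in RHS]cardsT -card_powerset powersetT cardsT.
rewrite card_sets_mem_notin -{2}(subnK T2) expnD; lia.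
Qed.

Lemma card_admissible :
  #|[set s | admissible s]| = 3 * 2 ^ (#|T| - 2) * #|P| - #|P| + 1.
Proof.
set I := [set S : {set T} | (x \in S) ==> (y \in S)].
have -> : [set s | admissible s] = (set0, p0) |: setX (I :\ set0) [set: P].
  apply/setP => -[S p]; rewrite !inE /admissible /= xpair_eqE.
  by case: eqVneq => [->|S0]; rewrite ?eqxx ?(negbTE S0) /= ?andbT ?orbF.
have I0 : 3 * 2 ^ (#|T| - 2) = 1 + #|I :\ set0|.
  by rewrite -card_sets_mem_imply (cardsD1 set0 I) !inE.
rewrite cardsU1 cardsX cardsT !inE eqxx /=.
by rewrite I0 mulnDl mul1n addKn addnC.
Qed.

End AdmissibleStates.

Lemma ltn_mul3_expn2 t : 2 <= t -> t < 3 * 2 ^ (t - 2).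
Proof.
case: t => [|[|k]] // _; rewrite !subSS subn0.
by elim: k => // k IH; rewrite expnS; lia.
Qed.

Lemma star_inter_upper (Sigma Q P : finType) (M : dfa Sigma Q) (N : dfa Sigma P) :
    2 <= #|Q| ->
  exists A : dfa Sigma 'I_(3 * 2 ^ (#|Q| - 2) * #|P| - #|P| + 1),
    recognizes A (inter (star (lang M)) (lang N)).
Proof.
move=> Q2; set K := _ + 1.
have QPK : #|Q| * #|P| <= K by have := ltn_mul3_expn2 Q2; rewrite /K; nia.
have N_lang : recognizes N (lang N) by [].
case: (boolP [exists x, final M x && (x != start M)]) => [/existsP [x /andP [fx xq0]]|].
  apply: (@recognizes_ord_inv _ _ (prod_dfa (star_dfa M) N) (admissible x (start M) (start N))).
  - by rewrite /admissible /= ?eqxx.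
  - move=> [S p] a _; rewrite /admissible /= (negbTE (star_delta_neq0 _ _ _)).
    by apply/implyP; apply: star_delta_start.
  - by rewrite card_admissible.
  - exact: prod_dfa_recognizes (star_dfa_recognizes M) N_lang.
rewrite negb_exists => /forallP final_start.
have finalE q : final M q -> q = start M.
  by move: (final_start q) => /[swap] -> /negPn /eqP.
have [f0|nf0] := boolP (final M (start M)).
  have M_star : recognizes M (star (lang M)).
    by apply: recognizes_star_of_final_eq_start => q; apply/idP/eqP => [/finalE|->].
  apply: (recognizes_ord _ (prod_dfa_recognizes M_star N_lang)).
  by rewrite card_prod.
have eps_star : recognizes (eps_dfa Sigma) (star (lang M)).
  apply: recognizes_ext (@eps_dfa_recognizes Sigma) _ => w; apply: iff_sym; apply: star_empty.
  by move=> v Mv; case/negP: nf0; rewrite -(finalE _ Mv).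
apply: (recognizes_ord _ (prod_dfa_recognizes eps_star N_lang)).
by rewrite card_prod card_bool (leq_trans _ QPK) // leq_mul2r Q2 orbT.
Qed.

Section Witness.
Variables m' n' : nat.
Local Notation m := m'.+2.
Local Notation n := n'.+2.

Definition wit_alphabet := ({ffun 'I_m -> 'I_m} * {ffun 'I_n -> 'I_n})%type.
Definition wit_M : dfa wit_alphabet 'I_m :=
  Dfa ord0 (fun q (a : wit_alphabet) => a.1 q) (fun q => q == ord_max).
Definition wit_N : dfa wit_alphabet 'I_n :=
  Dfa ord0 (fun p (a : wit_alphabet) => a.2 p) (fun p => p == ord0).
Local Notation C := (prod_dfa (star_dfa wit_M) wit_N).
Local Notation admissible_wit := (admissible (ord_max : 'I_m) ord0 (ord0 : 'I_n)).

Definition letter (f : 'I_m -> 'I_m) (g : 'I_n -> 'I_n) : wit_alphabet :=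
  ([ffun q => f q], [ffun p => g p]).

Lemma final_wit_M (X : {set 'I_m}) : [exists q in X, final wit_M q] = (ord_max \in X).
Proof.
by apply/existsP/idP => [[q /andP [Xq /eqP <-]] // | Xm]; exists ord_max; rewrite Xm /=.
Qed.

Lemma add_start_wit (X : {set 'I_m}) :
  add_start wit_M X = if ord_max \in X then ord0 |: X else X.
Proof. by rewrite /add_start final_wit_M. Qed.

Lemma delta_letter S p f g :
  delta C (S, p) (letter f g) = (add_start wit_M (f @: star_support wit_M S), g p).
Proof.
rewrite /= /star_delta ffunE; congr (add_start _ _, _).
by apply: eq_imset => q; rewrite /= ffunE.
Qed.

Lemma reachable_onto T p' S p :
    reachable C (T, p') -> S != set0 -> #|S| <= #|star_support wit_M T| ->
  reachable C (add_start wit_M S, p).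
Proof.
move=> reachT S0 ST; have [f <-] := exists_imset_onto S0 ST.
by have := reachable_delta (letter f (fun _ => p)) reachT; rewrite delta_letter.
Qed.

Lemma reachable_full_support : exists T p, reachable C (T, p) /\ #|star_support wit_M T| = m.
Proof.
suff grow k : k < m -> exists T p, reachable C (T, p) /\ #|star_support wit_M T| = k.+1.
  exact: grow.
elim: k => [_ | k IH km].
  by exists set0, ord0; split; [apply: reachable_start | rewrite /star_support eqxx cards1].
have [T [p [reachT cardT]]] := IH (ltnW km).
have [X XD cardX] : exists2 X : {set 'I_m}, X \subset ~: [set ord0; ord_max] & #|X| = k.
  have om : (ord0 : 'I_m) != ord_max by [].
  by apply: exists_subset_card; rewrite cardsCs setCK card_ord cards2 om; lia.
have X0 : ord0 \notin X by apply/negP => /(subsetP XD); rewrite !inE eqxx.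
have Xm : ord_max \notin X by apply/negP => /(subsetP XD); rewrite !inE eqxx orbT.
have mX0 : ord_max |: X != set0 by apply/set0Pn; exists ord_max; rewrite setU11.
have := reachable_onto ord0 reachT mX0.
rewrite add_start_wit setU11 cardsU1 Xm cardX cardT => /(_ (leqnn _)) reachS.
exists (ord0 |: (ord_max |: X)), ord0; split => //.
rewrite star_support_id; last by apply/set0Pn; exists ord0; rewrite setU11.
by rewrite cardsU1 !inE negb_or X0 cardsU1 Xm cardX.
Qed.

Lemma reachable_admissible s : admissible_wit s -> reachable C s.
Proof.
case: s => S p; rewrite /admissible /=.
case: (S =P set0) => [-> /eqP -> | /eqP S0 adm]; first exact: reachable_start.
have [T [p' [reachT cardT]]] := reachable_full_support.
have leT (Y : {set 'I_m}) : #|Y| <= #|star_support wit_M T|.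
  by rewrite cardT (leq_trans (max_card _)) ?card_ord.
have [Sm|Sm] := boolP (ord_max \in S); last first.
  by have := reachable_onto p reachT S0 (leT _); rewrite add_start_wit (negbTE Sm).
have S0' : ord0 \in S by rewrite Sm in adm.
have X0 : S :\ ord0 != set0 by apply/set0Pn; exists ord_max; rewrite !inE Sm andbT.
by have := reachable_onto p reachT X0 (leT _); rewrite add_start_wit !inE Sm andbT setD1K.
Qed.

Lemma final_letter S p f g :
  final C (foldl (delta C) (S, p) [:: letter f g]) =
  (ord_max \in f @: star_support wit_M S) && (g p == ord0).
Proof.
rewrite /= star_final_delta final_wit_M ffunE.
suff -> : [set delta wit_M q (letter f g) | q in star_support wit_M S] = f @: star_support wit_M S.
  by [].
by apply: eq_imset => q; rewrite /= ffunE.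
Qed.

Lemma distinguishable_N S1 p1 S2 p2 : p1 != p2 -> distinguishable C (S1, p1) (S2, p2).
Proof.
move=> p12; exists [:: letter (fun _ => ord_max) (fun p => if p == p1 then ord0 else ord_max)].
rewrite !final_letter eqxx [p2 == p1]eq_sym (negbTE p12) andbT andbF.
have /set0Pn [q Sq] := star_support_neq0 wit_M S1.
suff -> : ord_max \in [set (ord_max : 'I_m) | _ in star_support wit_M S1] by [].
by apply/imsetP; exists q.
Qed.

Lemma distinguishable_support S1 S2 p1 p2 :
  star_support wit_M S1 != star_support wit_M S2 -> distinguishable C (S1, p1) (S2, p2).
Proof.
move=> S12; have /existsP [q qS] :
    [exists q : 'I_m, (q \in star_support wit_M S1) != (q \in star_support wit_M S2)].
  by rewrite -negb_forall; apply: contra S12 => /forallP eqS; apply/eqP/setP => q; apply/eqP.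
exists [:: letter (fun r => if r == q then ord_max else ord0) (fun _ => ord0)].
have memE (X : {set 'I_m}) :
    (ord_max \in [set (if r == q then (ord_max : 'I_m) else ord0) | r in X]) = (q \in X).
  apply/imsetP/idP => [[r rX]|qX]; last by exists q; rewrite ?eqxx.
  by case: (r =P q) => [<- _ //|_ /eqP].
by rewrite !final_letter !memE !eqxx !andbT.
Qed.

Lemma distinguishable_set0 S :
  S != set0 -> star_support wit_M S = [set ord0] -> distinguishable C (set0, ord0) (S, ord0).
Proof.
move=> S0; rewrite star_support_id // => SE; rewrite SE in S0 *; exists [::].
rewrite /= /star_final eqxx (negbTE S0).
suff -> : [exists q in [set ord0], final wit_M q] = false by [].
by apply/existsP => -[q /andP [/set1P ->]].
Qed.

Lemma distinguishable_admissible s t :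
  admissible_wit s -> admissible_wit t -> s != t -> distinguishable C s t.
Proof.
case: s t => [S1 p1] [S2 p2] adm1 adm2 st.
have [p12|/distinguishable_N //] := eqVneq p1 p2; subst p2.
have [SS|/distinguishable_support //] := eqVneq (star_support wit_M S1) (star_support wit_M S2).
have startE S p : admissible_wit (S, p) -> S = set0 -> p = ord0.
  by move=> adm S0; move: adm; rewrite S0 /admissible /= eqxx => /eqP.
have supp0 : star_support wit_M set0 = [set ord0] by rewrite /star_support eqxx.
have [S10|S10] := eqVneq S1 set0.
  move: SS st; rewrite S10 (startE _ _ adm1 S10) supp0 => /esym SS st.
  by apply: distinguishable_set0 SS; apply: contraNneq st => ->.
have [S20|S20] := eqVneq S2 set0.
  move: SS st; rewrite S20 (startE _ _ adm2 S20) supp0 => SS st.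
  by apply: distinguishable_sym; apply: distinguishable_set0 SS; apply: contraNneq st => ->.
by move: st; rewrite -(star_support_id wit_M S10) -(star_support_id wit_M S20) SS eqxx.
Qed.

Lemma star_inter_wit_complexity :
  state_complexity_is (inter (star (lang wit_M)) (lang wit_N)) (3 * 2 ^ (m - 2) * n - n + 1).
Proof.
split; first by have := star_inter_upper wit_M wit_N; rewrite !card_ord; apply.
move=> k A A_rec.
have C_rec : recognizes C (inter (star (lang wit_M)) (lang wit_N)).
  exact: prod_dfa_recognizes (star_dfa_recognizes wit_M) (fun w => iff_refl _).
have <- : #|[set s | admissible_wit s]| = 3 * 2 ^ (m - 2) * n - n + 1.
  by rewrite card_admissible // !card_ord.
rewrite -[k]card_ord; apply: (@card_le_distinguishable _ _ _ C).
- by apply: recognizes_ext A_rec _ => w; apply: iff_sym.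
- by move=> s; rewrite inE; apply: reachable_admissible.
- by move=> s t; rewrite !inE; apply: distinguishable_admissible.
Qed.

End Witness.

Theorem theorem6 (m n : nat) (hm : 2 <= m) (hn : 2 <= n) :
  (forall (Sigma : finType) (M : dfa Sigma 'I_m) (N : dfa Sigma 'I_n),
     exists k, k <= 3 * 2 ^ (m - 2) * n - n + 1 /\
       exists A : dfa Sigma 'I_k, recognizes A (inter (star (lang M)) (lang N))) /\
  (exists (Sigma : finType) (M : dfa Sigma 'I_m) (N : dfa Sigma 'I_n),
     state_complexity_is (inter (star (lang M)) (lang N)) (3 * 2 ^ (m - 2) * n - n + 1)).
Proof.
case: m hm => [|[|m']] // _; case: n hn => [|[|n']] // _; split.
  move=> Sigma M N; have := star_inter_upper M N; rewrite !card_ord => /(_ isT) [A A_rec].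
  by exists (3 * 2 ^ (m'.+2 - 2) * n'.+2 - n'.+2 + 1); split; last exists A.
exists (wit_alphabet m' n'), (wit_M m' n'), (wit_N m' n').
exact: star_inter_wit_complexity.
Qed.
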